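(* Let $\sigma>0$, $\bar\gamma>0$, $c_\infty\ge0$, and for $\gamma\in(0,\bar\gamma]$ let $\tau_\gamma:[0,\infty)\to[0,\infty)$ be non-decreasing with $\tau_\gamma(0)=0$, and assume there exist $R_1,L\ge0$, $m>0$ such that for all $\gamma\in(0,\bar\gamma]$, $\sup_{r>0}\tau_\gamma(r)/r\le1+\gamma L$ and $\sup_{r>R_1}\tau_\gamma(r)/r\le1-\gamma m$. Let $Q_\gamma$ be the Markov kernel on $[0,\infty)$ $$Q_\gamma(w,A)=\delta_0(A)\int_{\mathbb{R}}\bar p_{\sigma^2\gamma}(\tau_\gamma(w)+\gamma c_\infty,g)\varphi(g)dg+\int_{\mathbb{R}}\mathbb{1}_A(\tau_\gamma(w)+\gamma c_\infty-2\sigma\gamma^{1/2}g)\{1-\bar p_{\sigma^2\gamma}(\tau_\gamma(w)+\gamma c_\infty,g)\}\varphi(g)dg,$$ where $\bar p_{\sigma^2\gamma}(a,g)=1\wedge\varphi_{\sigma^2\gamma}(a-\sigma\sqrt\gamma g)/\varphi_{\sigma^2\gamma}(\sigma\sqrt\gamma g)$. Let $\mathcal V_1^*(w)=w$. Then for all $\gamma\in(0,\bar\gamma]$ and $w\ge0$, $$Q_\gamma\mathcal V_1^*(w)\le(1-\gamma m)\mathcal V_1^*(w)\mathbb{1}_{(R_1,\infty)}(w)+(1+\gamma L)\mathcal V_1^*(w)\mathbb{1}_{(0,R_1]}(w)+\gamma c_\infty.$$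
   Context: $\varphi$ is the standard normal density and $\varphi_s(t)=(2\pi s)^{-1/2}e^{-t^2/(2s)}$. *)

From HB Require Import structures.
From mathcomp Require Import all_boot all_order all_algebra.
From mathcomp Require Import all_classical all_reals all_analysis.
Set Implicit Arguments. Unset Strict Implicit. Unset Printing Implicit Defensive.
Import Order.TTheory GRing.Theory Num.Theory.
Import numFieldNormedType.Exports.
Local Open Scope classical_set_scope.
Local Open Scope ring_scope.

Definition phi_s {R : realType} (s t : R) : R :=
  (Num.sqrt (2 * pi * s))^-1 * expR (- (t ^+ 2) / (2 * s)).

Definition phi {R : realType} (t : R) : R := phi_s 1 t.

Definition pbar {R : realType} (sigma gamma a g : R) : R :=
  Num.min 1 (phi_s (sigma ^+ 2 * gamma) (a - sigma * Num.sqrt gamma * g)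
             / phi_s (sigma ^+ 2 * gamma) (sigma * Num.sqrt gamma * g)).

Definition Qker {R : realType} (sigma cinf : R) (tau : R -> R) (gamma w : R)
  (A : set R) : \bar R :=
  let a := tau w + gamma * cinf in
  ((\1_A (0 : R))%:E *
     \int[@lebesgue_measure R]_(g in [set: R]) (pbar sigma gamma a g * phi g)%:E
   + \int[@lebesgue_measure R]_(g in [set: R])
       (\1_A (a - 2 * sigma * Num.sqrt gamma * g)
        * (1 - pbar sigma gamma a g) * phi g)%:E)%E.

(* Q_gamma V (w) = \int V(y) Q_gamma(w, dy), written out through the
   definition of the kernel (V(0) times the atom plus the image integral). *)
Definition Qapply {R : realType} (sigma cinf : R) (tau : R -> R) (gamma : R)
  (V : R -> R) (w : R) : \bar R :=
  let a := tau w + gamma * cinf in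
  ((V 0)%:E *
     \int[@lebesgue_measure R]_(g in [set: R]) (pbar sigma gamma a g * phi g)%:E
   + \int[@lebesgue_measure R]_(g in [set: R])
       (V (a - 2 * sigma * Num.sqrt gamma * g)
        * (1 - pbar sigma gamma a g) * phi g)%:E)%E.

Definition V1 {R : realType} (w : R) : R := w.

From HB Require Import structures.
From mathcomp Require Import all_boot all_order all_algebra.
From mathcomp Require Import all_classical all_reals all_analysis.
From mathcomp Require Import measurable_realfun normal_distribution.
From mathcomp Require Import ring lra.
Import Order.TTheory GRing.Theory Num.Theory.
Import numFieldNormedType.Exports.
Local Open Scope ring_scope.

(* Since [V1 0 = 0], only the second term of the kernel contributes. Writing
   [s = sigma * sqrt gamma], [a = tau w + gamma * cinf] and [c = a / s], the ratio
   inside [pbar] times [phi g] is [phi (g - c)], so the integrand becomes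
   [s * (c - 2g)^+ * (phi g - phi (g - c))]. The reflection [g -> c - g] maps
   [(c - 2g)^+ phi (g - c)] to [(2g - c)^+ phi g], hence the integral is
   [s * int (c - 2g) phi g dg = s * c = a], by symmetry of [phi] and [int phi = 1].
   It remains to bound [tau w] with the two assumptions on [tau r / r]. *)

Lemma continuous_pos_partM {R : realType} (u v : R -> R) :
  continuous u -> continuous v -> continuous (fun x => Num.max 0 (u x) * v x).
Proof.
move=> cu cv x; apply: cvgM; last exact: cv.
by apply: (@continuous_max _ _ (cst 0) u x); [exact: cvg_cst | exact: cu].
Qed.

Lemma continuous_affine {R : realType} (a b : R) : continuous (fun x : R => a - b * x).
Proof.
by move=> x; apply: cvgB; [exact: cvg_cst | apply: cvgM; [exact: cvg_cst | exact: cvg_id]].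
Qed.

Lemma pos_part_ge0 {R : realType} (x : R) : 0 <= Num.max 0 x.
Proof. by rewrite le_max lexx. Qed.

Lemma fin_num_addIe {R : numDomainType} (z x y : \bar R) :
  z \is a fin_num -> (x + z = y + z)%E -> x = y.
Proof. by move=> zfin /(congr1 (fun t => t - z)%E); rewrite !addeK. Qed.

Section standard_gaussian.
Context {R : realType}.
Local Notation mu := (@lebesgue_measure R).
Implicit Types (c m x : R).

Lemma phi_normal_pdf m x : phi (x - m) = normal_pdf m 1 x.
Proof.
rewrite normal_pdfE ?oner_neq0 // /phi /phi_s /normal_peak /normal_fun.
by rewrite expr1n !mulr1 mul1r -[pi *+ 2]mulr_natl.
Qed.

Lemma phiE x : phi x = normal_pdf 0 1 x.
Proof. by rewrite -phi_normal_pdf subr0. Qed.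

Lemma phi_gt0 x : 0 < phi x.
Proof.
by rewrite /phi /phi_s mulr_gt0 ?expR_gt0 // invr_gt0 sqrtr_gt0 !mulr_gt0 ?pi_gt0.
Qed.

Lemma phi_ge0 x : 0 <= phi x.
Proof. exact/ltW/phi_gt0. Qed.

Lemma phiN x : phi (- x) = phi x.
Proof. by rewrite /phi /phi_s sqrrN. Qed.

Lemma continuous_phi_shift m : continuous (fun x => phi (x - m)).
Proof.
rewrite (_ : (fun x => phi (x - m)) = normal_pdf m 1); last first.
  by apply/funext => x; rewrite phi_normal_pdf.
exact/continuous_normal_pdf/oner_neq0.
Qed.

Lemma continuous_phi : continuous (@phi R).
Proof.
have -> : @phi R = normal_pdf 0 1 by apply/funext => x; rewrite phiE.
exact/continuous_normal_pdf/oner_neq0.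
Qed.

Lemma integral_phi : (\int[mu]_x (phi x)%:E = 1)%E.
Proof. by under eq_integral do rewrite phiE; exact: integral_normal_pdf. Qed.

Lemma phi_shift_le c x : 0 <= c -> 2 * x <= c -> phi (x - c) <= phi x.
Proof.
move=> c0 xc; rewrite /phi /phi_s ler_wpM2l ?invr_ge0 ?sqrtr_ge0 // ler_expR.
rewrite !mulr1 ler_wpM2r ?invr_ge0 ?ler0n // lerN2.
have : 0 <= c * (c - 2 * x) by rewrite mulr_ge0 // subr_ge0.
nra.
Qed.

Lemma pos_part_mul_phi_le x : Num.max 0 x * phi x <= expR (- x ^+ 2 / 4).
Proof.
have [x0|x0] := lerP x 0; first by rewrite mul0r expR_ge0.
set E := expR (- x ^+ 2 / 4).
have E0 : 0 <= E by exact: expR_ge0.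
(* [x <= 1 + x^2/4 <= expR (x^2/4)] and [(2 pi)^(-1/2) <= 1] *)
have xE : x * E <= 1.
  rewrite /E mulNr expRN ler_pdivrMr ?expR_gt0 // mul1r.
  apply: le_trans (expR_ge1Dx _); have := sqr_ge0 (1 - x / 2); nra.
pose k : R := (Num.sqrt (2 * pi))^-1.
have k0 : 0 <= k by rewrite /k invr_ge0 sqrtr_ge0.
have k1 : k <= 1.
  have pi2 := @pi_ge2 R.
  rewrite /k invf_le1 ?sqrtr_gt0 ?mulr_gt0 ?pi_gt0 // -[leLHS]sqrtr1 ler_sqrt; lra.
have -> : phi x = k * (E * E).
  by rewrite /phi /phi_s !mulr1 -expRD; congr (_ * expR _); lra.
have xE0 : 0 <= x * E by rewrite mulr_ge0 // ltW.
have -> : x * (k * (E * E)) = k * (x * E) * E by ring.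
by rewrite ler_piMl // ?mulr_ge0 // mulr_ile1.
Qed.

Lemma integral_expR_sqr_quarter_lty :
  (\int[mu]_x (expR (- x ^+ 2 / 4))%:E < +oo)%E.
Proof.
have s0 : Num.sqrt (2 : R) != 0 by rewrite gt_eqF // sqrtr_gt0.
have p0 : normal_peak (Num.sqrt (2 : R)) != 0 by rewrite gt_eqF // normal_peak_gt0.
have E x : expR (- x ^+ 2 / 4) =
    (normal_peak (Num.sqrt 2))^-1 * normal_pdf 0 (Num.sqrt 2) x.
  rewrite normal_pdfE //= mulKf // /normal_fun subr0 sqr_sqrtr ?ler0n //.
  by congr (expR (_ / _)); rewrite -mulr_natr; lra.
under eq_integral do rewrite E EFinM.
rewrite ge0_integralZl //=.
- by rewrite integral_normal_pdf mule1 ltry.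
- by apply/measurable_EFinP; exact: measurable_normal_pdf.
- by move=> x _; rewrite lee_fin normal_pdf_ge0.
- by rewrite lee_fin invr_ge0 normal_peak_ge0.
Qed.

Lemma integral_pos_part_mul_phi_lty :
  (\int[mu]_x (Num.max 0 x * phi x)%:E < +oo)%E.
Proof.
apply: le_lt_trans integral_expR_sqr_quarter_lty.
apply: ge0_le_integral => //.
- by move=> x _; rewrite lee_fin mulr_ge0 ?phi_ge0 ?pos_part_ge0.
- apply/measurable_EFinP/measurable_funM; last exact: continuous_measurable_fun continuous_phi.
  exact: measurable_maxr.
- apply/measurable_EFinP/measurableT_comp => //.
  by apply: measurable_funM => //; apply: measurableT_comp.
- by move=> x _; rewrite lee_fin pos_part_mul_phi_le.
Qed.

End standard_gaussian.




Lemma phi_s_ratioM_phi {R : realType} (s a g : R) : 0 < s ->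
  phi_s (s ^+ 2) (a - s * g) / phi_s (s ^+ 2) (s * g) * phi g = phi (g - a / s).
Proof.
move=> s0; rewrite /phi /phi_s.
set k := (Num.sqrt (2 * pi * s ^+ 2))^-1.
have k0 : k != 0 by rewrite invr_eq0 gt_eqF // sqrtr_gt0 !mulr_gt0 ?pi_gt0 // exprn_gt0.
have kE X Y : k * expR X / (k * expR Y) = expR (X - Y).
  by rewrite expRD expRN; field; rewrite k0 gt_eqF ?expR_gt0.
by rewrite kE mulrCA -expRD; congr (_ * expR _); field; rewrite gt_eqF.
Qed.

Lemma pbar_phiE {R : realType} (sigma gamma a g : R) : 0 < sigma -> 0 < gamma ->
  pbar sigma gamma a g =
  Num.min 1 (phi (g - a / (sigma * Num.sqrt gamma)) / phi g).
Proof.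
move=> sigma0 gamma0; have s0 : 0 < sigma * Num.sqrt gamma by rewrite mulr_gt0 ?sqrtr_gt0.
rewrite /pbar -phi_s_ratioM_phi // mulfK ?gt_eqF ?phi_gt0 //.
by rewrite exprMn sqr_sqrtr // ltW.
Qed.

(* With [s = sigma * sqrt gamma] and [a = tau w + gamma * cinf], the second integrand
   of [Qapply sigma cinf tau gamma V1 w] is [s * reflection_integrand (a / s)]. *)
Definition reflection_integrand {R : realType} (c x : R) : R :=
  Num.max 0 (c - 2 * x) * (phi x - phi (x - c)).

Section reflection_integrand.
Context {R : realType}.
Implicit Types (c x : R).

Lemma reflection_integrandE c x : 0 <= c ->
  (c - 2 * x) * (1 - Num.min 1 (phi (x - c) / phi x)) * phi x = reflection_integrand c x.
Proof.
move=> c0; have phix := phi_gt0 x; rewrite /reflection_integrand.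
have [xc|xc] := lerP 0 (c - 2 * x).
  have -> : Num.min 1 (phi (x - c) / phi x) = phi (x - c) / phi x.
    by apply: min_r; rewrite ler_pdivrMr // mul1r phi_shift_le // -subr_ge0.
  by field; rewrite gt_eqF.
rewrite mul0r.
have -> : Num.min 1 (phi (x - c) / phi x) = 1; last by rewrite subrr mulr0 mul0r.
apply: min_l; rewrite ler_pdivlMr // mul1r.
have := @phi_shift_le R c (c - x) c0.
by rewrite addrAC subrr add0r phiN -opprB phiN; apply; lra.
Qed.

Lemma reflection_integrand_ge0 c x : 0 <= c -> 0 <= reflection_integrand c x.
Proof.
move=> c0; rewrite /reflection_integrand; have [xc|xc] := lerP 0 (c - 2 * x).
  by rewrite mulr_ge0 ?pos_part_ge0 // subr_ge0 phi_shift_le // -subr_ge0.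
by rewrite mul0r.
Qed.

Lemma continuous_reflection_integrand c : continuous (reflection_integrand c).
Proof.
apply: continuous_pos_partM (continuous_affine c 2) _ => x.
by apply: cvgB; [exact: continuous_phi | exact: continuous_phi_shift].
Qed.

End reflection_integrand.


Section ge0_continuous_integral.
Context {R : realType}.
Local Notation mu := (@lebesgue_measure R).
Local Open Scope ereal_scope.
Implicit Types (F G : R -> R).

Lemma ge0_continuous_integralD F G : continuous F -> continuous G ->
  (forall x, 0 <= F x)%R -> (forall x, 0 <= G x)%R ->
  \int[mu]_x (F x + G x)%:E = \int[mu]_x (F x)%:E + \int[mu]_x (G x)%:E.
Proof.
move=> cF cG F0 G0; under eq_integral do rewrite EFinD.
apply: ge0_integralD => //; do ?[by move=> x _; rewrite lee_fin];
  by apply/measurable_EFinP; exact: continuous_measurable_fun.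
Qed.

Lemma ge0_continuous_integralZl (k : R) G : (0 <= k)%R -> continuous G ->
  (forall x, 0 <= G x)%R ->
  \int[mu]_x (k * G x)%:E = k%:E * \int[mu]_x (G x)%:E.
Proof.
move=> k0 cG G0; under eq_integral do rewrite EFinM.
apply: ge0_integralZl => //; last by move=> x _; rewrite lee_fin.
by apply/measurable_EFinP; exact: continuous_measurable_fun.
Qed.

Let integral_split0 {G} : continuous G -> (forall x, 0 <= G x)%R ->
  \int[mu]_x (G x)%:E =
  \int[mu]_(x in `[0%R, +oo[) (G x)%:E + \int[mu]_(x in `]-oo, 0%R]) (G x)%:E.
Proof.
move=> cG G0; have mG : measurable_fun [set: R] G := continuous_measurable_fun cG.
rewrite -(setUv `[0%R, +oo[) ge0_integral_setU //=; last 4 first.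
- exact: measurableC.
- by apply/measurable_EFinP; rewrite setUv.
- by move=> x _; rewrite lee_fin.
- exact/disj_setPCl.
rewrite setCitvr integral_itv_bndo_bndc //.
by apply/measurable_EFinP; exact: measurable_funTS.
Qed.

Lemma ge0_continuous_integral_opp G : continuous G -> (forall x, 0 <= G x)%R ->
  \int[mu]_x (G (- x))%:E = \int[mu]_x (G x)%:E.
Proof.
move=> cG G0; have cGN : continuous (G \o -%R).
  by move=> x; apply: continuous_comp; [exact: (@continuousN _ R^o) | exact: cG].
have GN0 x : (0 <= (G \o -%R) x)%R by exact: G0.
rewrite (integral_split0 cG G0) (integral_split0 cGN GN0).
have substN F : continuous F -> (forall x, 0 <= F x)%R ->
    \int[mu]_(x in `]-oo, 0%R]) (F x)%:E =
    \int[mu]_(x in `[0%R, +oo[) ((F \o -%R) x)%:E.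
  move=> cF F0; have := @ge0_integration_by_substitutionNy R F 0.
  by rewrite oppr0; apply=> [|x _]; [exact: continuous_subspaceT | exact: F0].
rewrite (substN _ cGN GN0) (substN _ cG G0).
by rewrite addeC; congr (_ + _); apply: eq_integral => x _ /=; rewrite opprK.
Qed.

Lemma ge0_continuous_integral_shift G (b : R) : continuous G ->
  (forall x, 0 <= G x)%R ->
  \int[mu]_x (G (x + b))%:E = \int[mu]_x (G x)%:E.
Proof.
move=> cG G0.
have shift' : (fun x : R => x + b)%R^`()%classic = cst 1%R.
  by apply/funext => x; rewrite derive1E deriveD // derive_id derive_cst addr0.
rewrite (@increasing_ge0_integration_by_substitutionT _ (fun x => x + b)%R G) //.
- by apply: eq_integral => x _; rewrite shift' /= mulr1.
- by move=> x y; rewrite ltrD2r.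
- by rewrite shift' => ?; exact: cvg_cst.
- by rewrite shift'; exact: is_cvg_cst.
- by rewrite shift'; exact: is_cvg_cst.
- exact: cvg_addrr_Ny.
- exact: cvg_addrr.
Qed.

Lemma ge0_continuous_integral_reflect G (b : R) : continuous G ->
  (forall x, 0 <= G x)%R ->
  \int[mu]_x (G (b - x))%:E = \int[mu]_x (G x)%:E.
Proof.
move=> cG G0; have cGN : continuous (G \o -%R).
  by move=> x; apply: continuous_comp; [exact: (@continuousN _ R^o) | exact: cG].
transitivity (\int[mu]_x ((G \o -%R) (x - b)%R)%:E).
  by apply: eq_integral => x _ /=; rewrite opprB.
rewrite ge0_continuous_integral_shift //; last by move=> x; exact: G0.
exact: ge0_continuous_integral_opp.
Qed.

End ge0_continuous_integral.

Section integral_reflection_integrand.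
Context {R : realType}.
Local Notation mu := (@lebesgue_measure R).
Variable c : R.
Hypothesis c0 : 0 <= c.

Let P x := Num.max 0 (c - 2 * x) * phi x.
Let Q x := Num.max 0 (c - 2 * x) * phi (x - c).
Let N x := Num.max 0 (2 * x - c) * phi x.
Let M (x : R) := Num.max 0 x * phi x.
Let M' (x : R) := Num.max 0 (- x) * phi x.

Let cP : continuous P. Proof. exact: continuous_pos_partM (continuous_affine c 2) continuous_phi. Qed.
Let cQ : continuous Q.
Proof. exact: continuous_pos_partM (continuous_affine c 2) (continuous_phi_shift c). Qed.
Let cN : continuous N.
Proof.
apply: continuous_pos_partM continuous_phi => x.
by apply: cvgB; [apply: cvgM; [exact: cvg_cst | exact: cvg_id] | exact: cvg_cst].
Qed.
Let cM : continuous M. Proof. exact: continuous_pos_partM (fun x => cvg_id) continuous_phi. Qed.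
Let cM' : continuous M'.
Proof. by apply: continuous_pos_partM continuous_phi => x; apply: cvgN; exact: cvg_id. Qed.

Let P0 x : 0 <= P x. Proof. by rewrite mulr_ge0 ?pos_part_ge0 ?phi_ge0. Qed.
Let Q0 x : 0 <= Q x. Proof. by rewrite mulr_ge0 ?pos_part_ge0 ?phi_ge0. Qed.
Let N0 x : 0 <= N x. Proof. by rewrite mulr_ge0 ?pos_part_ge0 ?phi_ge0. Qed.
Let M0 x : 0 <= M x. Proof. by rewrite mulr_ge0 ?pos_part_ge0 ?phi_ge0. Qed.
Let M'0 x : 0 <= M' x. Proof. by rewrite mulr_ge0 ?pos_part_ge0 ?phi_ge0. Qed.

Let N_le_2M (x : R) : N x <= 2 * M x.
Proof.
rewrite /N /M mulrA; apply: ler_wpM2r; first exact: phi_ge0.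
have [x0|x0] := lerP 0 x; have [y0|y0] := lerP 0 (2 * x - c).
all: move: c0; lra.
Qed.

(* The signed identity [(c - 2x)^+ - (2x - c)^+ = c - 2x], rearranged so that only
   integrals of nonnegative functions occur. *)
Let pos_part_decomposition (x : R) :
  Num.max 0 (c - 2 * x) + 2 * Num.max 0 x =
  c + 2 * Num.max 0 (- x) + Num.max 0 (2 * x - c).
Proof.
have [|] := lerP 0 (c - 2 * x); have [|] := lerP 0 x; have [|] := lerP 0 (- x);
  have [|] := lerP 0 (2 * x - c); lra.
Qed.

Local Open Scope ereal_scope.

Let integral_reflectionD_Q :
  \int[mu]_x (reflection_integrand c x)%:E + \int[mu]_x (Q x)%:E = \int[mu]_x (P x)%:E.
Proof.
rewrite -ge0_continuous_integralD //; last by move=> x; exact: reflection_integrand_ge0.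
  by apply: eq_integral => x _; rewrite /reflection_integrand /P /Q; congr EFin; ring.
exact: continuous_reflection_integrand.
Qed.

Let integral_Q : \int[mu]_x (Q x)%:E = \int[mu]_x (N x)%:E.
Proof.
rewrite -(ge0_continuous_integral_reflect _ c cQ Q0); apply: eq_integral => x _.
by rewrite /Q /N addrAC subrr add0r phiN; congr (Num.max 0 _ * _)%:E; ring.
Qed.

Let integral_M' : \int[mu]_x (M' x)%:E = \int[mu]_x (M x)%:E.
Proof.
rewrite -(ge0_continuous_integral_opp _ cM M0); apply: eq_integral => x _.
by rewrite /M /M' phiN.
Qed.

Let integral_P_decomposition :
  \int[mu]_x (P x)%:E + (2 : R)%:E * \int[mu]_x (M x)%:E =
  c%:E + (2 : R)%:E * \int[mu]_x (M x)%:E + \int[mu]_x (N x)%:E.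
Proof.
have cZ (k : R) (f : R -> R) : continuous f -> continuous (fun x => k * f x)%R.
  by move=> cf x; apply: cvgM; [exact: cvg_cst | exact: cf].
have cD (f g : R -> R) : continuous f -> continuous g -> continuous (fun x => f x + g x)%R.
  by move=> cf cg x; apply: cvgD; [exact: cf | exact: cg].
have c2 : (0 <= 2 :> R)%R by [].
have cphi := @continuous_phi R; have phi0 := @phi_ge0 R.
rewrite -[in RHS]integral_M' -[c%:E]mule1 -integral_phi.
rewrite -!ge0_continuous_integralZl // -!ge0_continuous_integralD //.
  apply: eq_integral => x _; congr EFin.
  rewrite /P /M /M' /N.
  transitivity ((Num.max 0 (c - 2 * x) + 2 * Num.max 0 x) * phi x)%R; first by ring.
  by rewrite pos_part_decomposition; ring.
- by apply: cD; apply: cZ.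
- by move=> x; apply: addr_ge0; apply: mulr_ge0.
all: by [apply: cZ | move=> x; apply: mulr_ge0].
Qed.

Let integral_M_fin : \int[mu]_x (M x)%:E \is a fin_num.
Proof.
rewrite ge0_fin_numE ?integral_pos_part_mul_phi_lty //.
by apply: integral_ge0 => x _; rewrite lee_fin.
Qed.

Let integral_N_fin : \int[mu]_x (N x)%:E \is a fin_num.
Proof.
rewrite ge0_fin_numE; last by apply: integral_ge0 => x _; rewrite lee_fin.
apply: (@le_lt_trans _ _ ((2 : R)%:E * \int[mu]_x (M x)%:E)).
  rewrite -ge0_continuous_integralZl //; apply: ge0_le_integral => //.
  - by move=> x _; rewrite lee_fin.
  - by apply/measurable_EFinP; exact: continuous_measurable_fun.
  - by apply/measurable_EFinP; apply: measurable_funM => //; exact: continuous_measurable_fun.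
  by move=> x _; rewrite lee_fin N_le_2M.
by rewrite -(fineK integral_M_fin) -EFinM ltry.
Qed.

Lemma integral_reflection_integrand : \int[mu]_x (reflection_integrand c x)%:E = c%:E.
Proof.
have := integral_P_decomposition; rewrite -integral_reflectionD_Q integral_Q.
have nm_fin : \int[mu]_x (N x)%:E + (2 : R)%:E * \int[mu]_x (M x)%:E \is a fin_num.
  by rewrite fin_numD integral_N_fin fin_numM.
rewrite -addeA [in X in _ = X]addeAC -[in X in _ = X]addeA.
exact: fin_num_addIe.
Qed.

End integral_reflection_integrand.

Lemma le_ratio_bounds {R : realType} (f : R -> R) (R1 a b w : R) :
  0 <= R1 -> f 0 = 0 ->
  (forall r, 0 < r -> f r / r <= b) -> (forall r, R1 < r -> f r / r <= a) ->
  0 <= w ->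
  f w <= a * w * (if R1 < w then 1 else 0)
         + b * w * (if (0 < w) && (w <= R1) then 1 else 0).
Proof.
move=> R1_0 f0 fb fa w0; have [->|wn0] := eqVneq w 0.
  by rewrite f0 ltNge R1_0 ltxx /= !mulr0 !addr0.
have wpos : 0 < w by rewrite lt_neqAle eq_sym wn0.
rewrite wpos /=; have [R1w|wR1] := ltP R1 w.
  by rewrite mulr1 mulr0 addr0 -ler_pdivrMr // fa.
by rewrite mulr0 mulr1 add0r -ler_pdivrMr // fb.
Qed.

Theorem proposition8 (R : realType) (sigma gbar cinf R1 L m : R)
  (tau : R -> R -> R)
  (hsigma : 0 < sigma) (hgbar : 0 < gbar) (hcinf : 0 <= cinf)
  (hR1 : 0 <= R1) (hL : 0 <= L) (hm : 0 < m)
  (htau_pos : forall gamma, 0 < gamma <= gbar ->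
     forall r, 0 <= r -> 0 <= tau gamma r)
  (htau_mono : forall gamma, 0 < gamma <= gbar ->
     forall r s, 0 <= r -> r <= s -> tau gamma r <= tau gamma s)
  (htau0 : forall gamma, 0 < gamma <= gbar -> tau gamma 0 = 0)
  (hsupL : forall gamma, 0 < gamma <= gbar ->
     forall r, 0 < r -> tau gamma r / r <= 1 + gamma * L)
  (hsupm : forall gamma, 0 < gamma <= gbar ->
     forall r, R1 < r -> tau gamma r / r <= 1 - gamma * m) :
  forall gamma w, 0 < gamma <= gbar -> 0 <= w ->
    (Qapply sigma cinf (tau gamma) gamma V1 w <=
     ((1 - gamma * m) * V1 w * (if R1 < w then 1 else 0)
      + (1 + gamma * L) * V1 w * (if (0 < w) && (w <= R1) then 1 else 0)
      + gamma * cinf)%:E)%E.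
Proof.
move=> gamma w hgamma w0; have /andP[gamma0 _] := hgamma.
set s := sigma * Num.sqrt gamma; set a := tau gamma w + gamma * cinf.
have s0 : 0 < s by rewrite mulr_gt0 // sqrtr_gt0.
have a0 : 0 <= a by rewrite addr_ge0 ?htau_pos // mulr_ge0 // ltW.
have c0 : 0 <= a / s by rewrite divr_ge0 // ltW.
have integrandE x : (a - 2 * sigma * Num.sqrt gamma * x) * (1 - pbar sigma gamma a x)
    * phi x = s * reflection_integrand (a / s) x.
  rewrite pbar_phiE // -/s -reflection_integrandE // !mulrA.
  congr (_ * _ * _); congr (_ * _).
  by rewrite mulrBr [s * (a / s)]mulrC divfK ?gt_eqF // /s; ring.
rewrite /Qapply /V1 mul0e add0e; under eq_integral do rewrite integrandE.
rewrite ge0_continuous_integralZl ?(ltW s0) //; last 2 first.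
- exact: continuous_reflection_integrand.
- by move=> x; exact: reflection_integrand_ge0.
rewrite integral_reflection_integrand // -EFinM mulrC divfK ?gt_eqF //.
rewrite lee_fin lerD2r le_ratio_bounds // => [|r|r].
- exact: htau0.
- exact: hsupL.
- exact: hsupm.
Qed.
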